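(* Let $h$ be a Hessenberg function on $\{1,\dots,n\}$. Every $(h,(n))$-filling occurs exactly once among the words at Level $n$ of the $h$-tableau-tree; i.e. the Level $n$ words are exactly all $(h,(n))$-fillings.
   Context: A Hessenberg function is $h:\{1,\dots,n\}\to\{1,\dots,n\}$, $h_i=h(i)$, with $i\le h_i$ and $h_i\le h_{i+1}$; degree tuple $\beta_i=i-\#\{k:h_k<i\}$. A word $u_1\cdots u_m$ of distinct numbers is $h$-permissible if $u_t\le h(u_{t+1})$ for all $t$; an $(h,(n))$-filling is an $h$-permissible permutation of $1,\dots,n$ written in one row. The $h$-tableau-tree: Level 1 is the word $1$; a vertex at Level $i-1$ is an $h$-permissible word $w$ on $\{1,\dots,i-1\}$, whose $\beta_i$ bullet positions are the gaps where inserting $i$ keeps the word $h$-permissible; its children at Level $i$ are joined by edges $x_i^j$, $0\le j\le\beta_i-1$, the child along $x_i^j$ being $w$ with $i$ inserted at the $(j+1)$-th bullet from the right. Each Level $n$ word has one leaf child at Level $n+1$ (edge label $1$), labelled by the product of edge labels on its root path. *)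

From mathcomp Require Import all_boot.
Set Implicit Arguments. Unset Strict Implicit. Unset Printing Implicit Defensive.

(* A Hessenberg function on {1,...,n}, represented as h : nat -> nat
   (only its values on 1..n matter). *)
Definition hessenberg (n : nat) (h : nat -> nat) : Prop :=
  (forall i, 1 <= i <= n -> i <= h i <= n) /\
  (forall i, 1 <= i < n -> h i <= h i.+1).

Definition permissible (h : nat -> nat) (u : seq nat) : bool :=
  uniq u && sorted (fun a b => a <= h b) u.

Definition filling (h : nat -> nat) (n : nat) (u : seq nat) : bool :=
  permissible h u && perm_eq u (iota 1 n).

(* insert x in the gap number k (counted from the left, 0 = before everything) *)
Definition insert_at (k : nat) (x : nat) (w : seq nat) : seq nat :=
  take k w ++ x :: drop k w.

Definition bullets (h : nat -> nat) (i : nat) (w : seq nat) : seq nat :=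
  [seq k <- iota 0 (size w).+1 | permissible h (insert_at k i w)].

(* children of w at the next level, along edges x_i^j, j = 0,1,...:
   the child along x_i^j inserts i at the (j+1)-th bullet from the right *)
Definition children (h : nat -> nat) (i : nat) (w : seq nat) : seq (seq nat) :=
  let B := rev (bullets h i w) in
  [seq insert_at (nth 0 B j) i w | j <- iota 0 (size B)].

(* level_words h k = list (with multiplicity) of the words at Level k.+1. *)
Fixpoint level_words (h : nat -> nat) (k : nat) : seq (seq nat) :=
  match k with
  | 0 => [:: [:: 1]]
  | k'.+1 => flatten [seq children h k.+1 w | w <- level_words h k']
  end.

Definition level (h : nat -> nat) (i : nat) : seq (seq nat) := level_words h i.-1.

From mathcomp Require Import all_boot.

(* Deleting the largest letter i from an (h,(i))-filling leaves an
   (h,(i-1))-filling: its neighbours a, b satisfy a < i <= h b, so the new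
   adjacency a, b is again permissible.  Conversely the children of a filling u
   of Level i-1 are the insertions of i into u that stay permissible, each
   obtained once since distinct gaps give distinct words.  Hence a word w
   occurs at Level i exactly as often as its deletion rem i w occurs at
   Level i-1 when w is a filling, and never otherwise; induction on i finishes. *)

Lemma sorted_filter_bypass (T : eqType) (r : rel T) (i : T) (s : seq T) :
  {in s, forall a b, r a i -> r i b -> r a b} ->
  sorted r s -> sorted r [seq y <- s | y != i].
Proof.
move=> bypass.
(* The right disjunct records that the letter just before t was a deleted i. *)
have path_bypass t x : {subset x :: t <= s} -> x != i ->
    path r x t || r x i && path r i t -> path r x [seq y <- t | y != i].
  elim: t x => [|y t IHt] x sub_xt xi //= hyp.
  have sub_yt : {subset y :: t <= s} by move=> z zt; apply/sub_xt/mem_behead.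
  have sub_xt' : {subset x :: t <= s}.
    move=> z; rewrite inE => /predU1P[-> | zt]; apply: sub_xt.
      exact: mem_head.
    by rewrite !inE zt !orbT.
  case: eqVneq => [yi | yi] /=.
  - subst y; apply: IHt => //; apply/orP; right.
    by case/orP: hyp => [// | /and3P[-> _ ->]].
  - have [rxy path_yt] : r x y /\ path r y t.
      case/orP: hyp => [/andP[] // | /and3P[rxi riy path_yt]]; split=> //.
      exact: bypass (sub_xt _ (mem_head _ _)) _ rxi riy.
    by rewrite rxy IHt // path_yt.
suff : forall t, {subset t <= s} -> sorted r t -> sorted r [seq y <- t | y != i].
  by apply.
elim=> [|y t IHt] //= sub_yt path_yt.
have sub_t : {subset t <= s} by move=> z zt; apply/sub_yt/mem_behead.
case: eqVneq => [yi | yi] /=; first exact: IHt sub_t (path_sorted path_yt).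
by apply: path_bypass; rewrite ?path_yt.
Qed.

Lemma rem_cat_cons (T : eqType) (x : T) (s1 s2 : seq T) :
  x \notin s1 -> rem x (s1 ++ x :: s2) = s1 ++ s2.
Proof.
elim: s1 => [|y s1 IHs1] /=; first by rewrite eqxx.
by rewrite inE negb_or eq_sym => /andP[/negbTE-> /IHs1->].
Qed.

Section Insertion.

Variable x : nat.

Lemma perm_insert_at k (s : seq nat) : perm_eq (insert_at k x s) (x :: s).
Proof. by rewrite /insert_at perm_catC /= perm_cons perm_catC cat_take_drop. Qed.

Lemma index_insert_at k (s : seq nat) :
  x \notin s -> k <= size s -> index x (insert_at k x s) = k.
Proof.
move=> xNs k_le; have xNtake : x \notin take k s by apply: contra xNs; apply: mem_take.
by rewrite index_cat (negbTE xNtake) /= eqxx addn0 size_takel.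
Qed.

Lemma mem_insertions (s w : seq nat) :
  x \notin s -> uniq s ->
  (w \in [seq insert_at k x s | k <- iota 0 (size s).+1]) =
  [&& uniq w, x \in w & rem x w == s].
Proof.
move=> xNs uniq_s; apply/mapP/and3P => [[k _ ->] | [uniq_w x_w /eqP<-]].
- have xNtake : x \notin take k s by apply: contra xNs; apply: mem_take.
  rewrite (perm_uniq (perm_insert_at k s)) (perm_mem (perm_insert_at k s)) /=.
  by rewrite xNs uniq_s mem_head /insert_at rem_cat_cons // cat_take_drop.
- case/(@splitPr nat): x_w uniq_w => s1 s2 uniq_w.
  have xNs1 : x \notin s1 by move: uniq_w; rewrite cat_uniq /= => /and3P[_ /norP[]].
  rewrite rem_cat_cons //; exists (size s1).
    by rewrite mem_iota add0n ltnS size_cat; apply: leq_addr.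
  by rewrite /insert_at take_size_cat // drop_size_cat.
Qed.

End Insertion.

Lemma children_map (h : nat -> nat) (i : nat) (u : seq nat) :
  children h i u = [seq insert_at k i u | k <- rev (bullets h i u)].
Proof.
by rewrite /children -[in RHS](take_size (rev _)) -(map_nth_iota0 0 (leqnn _)) -map_comp.
Qed.

Lemma uniq_children (h : nat -> nat) (i : nat) (u : seq nat) :
  i \notin u -> uniq (children h i u).
Proof.
move=> iNu; rewrite children_map map_inj_in_uniq ?rev_uniq ?filter_uniq ?iota_uniq //.
move=> k l; rewrite !mem_rev !mem_filter !mem_iota !ltnS => /andP[_ /andP[_ k_le]].
move=> /andP[_ /andP[_ l_le]] eq_kl.
by rewrite -(index_insert_at i k u iNu k_le) eq_kl index_insert_at.
Qed.

Lemma mem_children (h : nat -> nat) (i : nat) (u w : seq nat) :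
  (w \in children h i u) =
  permissible h w && (w \in [seq insert_at k i u | k <- iota 0 (size u).+1]).
Proof.
rewrite children_map map_rev mem_rev /bullets.
apply/mapP/andP => [[k] | [pw /mapP[k k_iota w_eq]]].
  by rewrite mem_filter => /andP[pk k_iota] ->; split=> //; apply/mapP; exists k.
by exists k; rewrite // mem_filter -w_eq pw.
Qed.

Lemma perm_iota1S (m : nat) : perm_eq (iota 1 m.+1) (m.+1 :: iota 1 m).
Proof. by rewrite -(addn1 m) iotaD perm_catC add1n addn1. Qed.

Lemma filling_rem_max (h : nat -> nat) (m : nat) (w : seq nat) :
  filling h m.+1 w -> filling h m (rem m.+1 w).
Proof.
case/andP=> /andP[uniq_w sorted_w] perm_w.
have mw : m.+1 \in w by rewrite (perm_mem perm_w) mem_iota add1n ltnSn.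
rewrite /filling /permissible rem_uniq //=; apply/andP; split.
  rewrite rem_filter //; apply: sorted_filter_bypass sorted_w => a a_w b _.
  have : a <= m.+1 by move: a_w; rewrite (perm_mem perm_w) mem_iota add1n ltnS => /andP[].
  exact: leq_trans.
by rewrite -(perm_cons m.+1) -(permPr (perm_iota1S m)) -(permPl (perm_to_rem mw)).
Qed.

Lemma count_mem_children (h : nat -> nat) (m : nat) (u w : seq nat) :
  filling h m u ->
  count_mem w (children h m.+1 u) = filling h m.+1 w && (rem m.+1 w == u).
Proof.
case/andP=> /andP[uniq_u _] perm_u.
have mNu : m.+1 \notin u by rewrite (perm_mem perm_u) mem_iota add1n ltnn andbF.
rewrite count_uniq_mem ?uniq_children // mem_children mem_insertions //.
congr (nat_of_bool _); apply/andP/andP.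
  case=> pw /and3P[_ mw /eqP rem_w]; split; last exact/eqP.
  rewrite /filling pw /=.
  by rewrite (permPl (perm_to_rem mw)) (permPr (perm_iota1S m)) perm_cons rem_w.
case=> /andP[pw perm_w] /eqP <-; split=> //; apply/and3P; split=> //.
  by case/andP: pw.
by rewrite (perm_mem perm_w) mem_iota add1n ltnSn.
Qed.

Lemma count_mem_level (h : nat -> nat) (m : nat) (w : seq nat) :
  count_mem w (level_words h m) = filling h m.+1 w.
Proof.
elim: m w => [|m IHm] w.
  rewrite /= addn0; congr (nat_of_bool _).
  by apply/eqP/idP => [<- // | /andP[_ /(perm_small_eq (isT : size (iota 1 1) <= 1))->]].
set L := level_words h m.
have child_count : {in L, count_mem w \o children h m.+2 =1
                          fun u => filling h m.+2 w && (rem m.+2 w == u) : nat}.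
  move=> u u_L; apply: count_mem_children.
  by rewrite -(lt0b (filling h m.+1 u)) -IHm -has_count has_pred1.
rewrite /= count_flatten -map_comp; have /eq_in_map-> := child_count.
rewrite sumn_count; case fill_w: (filling h m.+2 w) => /=; last exact: count_pred0.
rewrite (eq_count (a2 := pred1 (rem m.+2 w))) => [|u]; last by rewrite /= eq_sym.
by rewrite IHm filling_rem_max.
Qed.

Theorem mainTheorem15 (n : nat) (h : nat -> nat) :
  1 <= n -> hessenberg n h ->
  forall w : seq nat, count_mem w (level h n) = filling h n w.
Proof. by case: n => [|m] // _ _ w; apply: count_mem_level. Qed.
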